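(* Let $W_0,W_1,W_2,\dots$ be the words over the alphabet $\{c_0,c_1,c_2,c_3\}$ defined by $W_k=c_k$ for $k=0,1,2,3$ and, recursively, $W_{2n+2}=W_0W_1W_2\cdots W_{2n}$ for $n\ge1$ and $W_{2n+1}=W_{2n-1}W_{2n-2}W_{2n-1}$ for $n\ge2$. Let $\sigma$ be the morphism $\sigma(c_0)=c_0c_1$, $\sigma(c_1)=c_2c_3$, $\sigma(c_2)=c_0c_1c_2$, $\sigma(c_3)=c_3c_2c_3$. Then for each $n\ge0$, $W_{2n+2}=\sigma^n(c_2)$ and $W_{2n+3}=\sigma^n(c_3)$.
   Context: In the paper, $W_k$ is the coding $\Psi(\Lambda_k)$ of the Lucas interval $\Lambda_k$ (where $\Lambda_0=[0,1]$, $\Lambda_{2n}=[L_{2n},L_{2n+1}]$, $\Lambda_{2n+1}=[L_{2n+1}+1,L_{2n+2}-1]$ for $n\ge1$, with Lucas numbers $L_0=2$, $L_1=1$, $L_n=L_{n-1}+L_{n-2}$); the statement above only depends on the recursive definition of the words. Juxtaposition denotes concatenation of words. *)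

From mathcomp Require Import all_boot.
Set Implicit Arguments. Unset Strict Implicit. Unset Printing Implicit Defensive.

Inductive letter := c0 | c1 | c2 | c3.

Definition word := seq letter.

Definition sigma_letter (a : letter) : word :=
  match a with
  | c0 => [:: c0; c1]
  | c1 => [:: c2; c3]
  | c2 => [:: c0; c1; c2]
  | c3 => [:: c3; c2; c3]
  end.

Definition sigma (w : word) : word := flatten (map sigma_letter w).

(* The recursive definition of the words W_k, as a predicate on a family
   W : nat -> word. The family is uniquely determined by these equations. *)
Definition is_W (W : nat -> word) : Prop :=
  [/\ W 0 = [:: c0], W 1 = [:: c1], W 2 = [:: c2], W 3 = [:: c3] &
      ((forall n, 1 <= n -> W (2 * n + 2) = flatten [seq W i | i <- iota 0 (2 * n + 1)])
    /\ (forall n, 2 <= n -> W (2 * n + 1) = W (2 * n - 1) ++ W (2 * n - 2) ++ W (2 * n - 1)))].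

From mathcomp Require Import all_boot.
From mathcomp Require Import zify.

(* The key identity is sigma (W_j) = W_(j+2) for every j >= 2, proved by strong
   induction on j.  For odd j it follows by applying sigma to the three factors
   of W_j.  For even j, W_j is the prefix product W_0 ... W_(j-2); since
   sigma (c_0 c_1) = c_0 c_1 c_2 c_3 = W_0 W_1 W_2 W_3, applying sigma to the
   prefix product shifts every later factor by two and yields W_0 ... W_j,
   which is W_(j+2).  The theorem is then the iteration of the key identity
   starting from W_2 = c_2 and W_3 = c_3. *)

Lemma sigma_cat : {morph sigma : u v / u ++ v}.
Proof. by move=> u v; rewrite /sigma map_cat flatten_cat. Qed.

Lemma nat_ge2_cases j : 2 <= j ->
  [\/ j = 2, j = 3, exists m, j = 2 * m + 4 | exists m, j = 2 * m + 5].
Proof.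
move=> hj; have := odd_double_half j; rewrite -muln2.
case: (odd j) (j./2) => [] [|[|m]] /= hjE;
  first [ by constructor 1; lia | by constructor 2; lia
        | by constructor 3; exists m; lia | by constructor 4; exists m; lia
        | lia ].
Qed.

Section LucasWords.

Variable W : nat -> word.
Hypothesis hW : is_W W.

Definition prefix k : word := flatten [seq W i | i <- iota 0 k].

Lemma prefixS k : prefix k.+1 = prefix k ++ W k.
Proof. by rewrite /prefix -addn1 iotaD map_cat flatten_cat /= cats0. Qed.

Lemma W_evenE m : W (2 * m + 4) = prefix (2 * m + 3).
Proof.
case: hW => _ _ _ _ [W_even _].
by have := W_even m.+1 isT; rewrite !mulnS !addnS !addSn.
Qed.

Lemma W_oddE m : W (2 * m + 5) = W (2 * m + 3) ++ W (2 * m + 2) ++ W (2 * m + 3).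
Proof.
case: hW => _ _ _ _ [_ W_odd].
have -> : 2 * m + 5 = 2 * m.+2 + 1 by lia.
by rewrite W_odd //; congr (W _ ++ W _ ++ W _); lia.
Qed.

Lemma sigma_prefix k :
  (forall i, 2 <= i < k.+2 -> sigma (W i) = W i.+2) ->
  sigma (prefix k.+2) = prefix k.+4.
Proof.
case: hW => W0 W1 W2 W3 _.
elim: k => [|k IH] sigmaW.
  by rewrite /prefix /= W0 W1 W2 W3.
rewrite prefixS sigma_cat IH => [|i /andP [i_ge2 i_lt]]; last first.
  by apply: sigmaW; rewrite i_ge2 ltnS ltnW.
by rewrite sigmaW ?ltnSn // -prefixS.
Qed.

Lemma sigma_W j : 2 <= j -> sigma (W j) = W j.+2.
Proof.
case: (hW) => W0 W1 W2 W3 _.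
elim/ltn_ind: j => j IH /nat_ge2_cases [->|->|[m ?]|[m ?]]; subst.
- by rewrite W2 (W_evenE 0) /prefix /= W0 W1 W2.
- by rewrite W3 (W_oddE 0) /= W2 W3.
- have -> : (2 * m + 4).+2 = 2 * m.+1 + 4 by lia.
  rewrite !W_evenE (_ : 2 * m + 3 = (2 * m + 1).+2) ?sigma_prefix; try lia.
    by congr prefix; lia.
  by move=> i /andP [i_ge2 i_lt]; apply: IH; lia.
- have -> : (2 * m + 5).+2 = 2 * m.+1 + 5 by lia.
  rewrite !W_oddE !sigma_cat !IH; try lia.
  by congr (W _ ++ W _ ++ W _); lia.
Qed.

End LucasWords.

Theorem lemma4 (W : nat -> word) (hW : is_W W) :
  forall n : nat,
    W (2 * n + 2) = iter n sigma [:: c2] /\ W (2 * n + 3) = iter n sigma [:: c3].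
Proof.
case: (hW) => _ _ W2 W3 _.
elim=> [|n [IH2 IH3]]; first by rewrite W2 W3.
rewrite !iterS -IH2 -IH3 !sigma_W //; try lia.
by split; congr W; lia.
Qed.
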